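(* For every $n$ that is a power of a prime, there exists a split graph $G_n$ with $2(n^2+n+1)$ vertices such that every fractional $2$-guidance system and every weak $2$-guidance system of $G_n$ has maximum outdegree at least $(n+1)/2$.
   Context: All graphs are finite, simple and undirected. A split graph is a graph whose vertex set can be partitioned into a clique and an independent set. For $u,v$ at distance $\ell$, $\Gamma_G(u,v)$ is the set of neighbors of $u$ at distance $\ell-1$ from $v$. A partial orientation of $G$ is a directed graph $\vec{H}$ on $V(G)$ with every $(u,v)\in E(\vec{H})$ satisfying $uv\in E(G)$. $B_{\vec{H}}(v,a)$ is the set of vertices reachable from $v$ by a directed path of length at most $a$. A weak $r$-guidance system is a partial orientation $\vec{H}$ such that for any distinct $u,v$ at distance $\ell\le r$ there exist non-negative integers $a,b$ with $a+b=\ell-1$ such that $G$ has an edge between $B_{\vec{H}}(u,a)$ and $B_{\vec{H}}(v,b)$. A fractional orientation assigns a non-negative real $p(u,v)$ to each ordered pair of adjacent vertices; its maximum outdegree is $\max_u\sum_{v:uv\in E(G)}p(u,v)$. A fractional $r$-guidance system is a fractional orientation with $\sum_{y\in\Gamma_G(u,v)}p(u,y)+\sum_{y\in\Gamma_G(v,u)}p(v,y)\ge1$ for all $u,v$ at distance between $2$ and $r$. *)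

From HB Require Import structures.
From mathcomp Require Import all_boot all_order all_algebra.
Set Implicit Arguments. Unset Strict Implicit. Unset Printing Implicit Defensive.
Import Order.TTheory GRing.Theory Num.Theory.

Section GraphDefs.
Variable T : finType.

Definition simple_graph (e : rel T) : Prop := symmetric e /\ irreflexive e.

Definition split_graph (e : rel T) : Prop :=
  exists K : {set T},
    (forall x y, x \in K -> y \in K -> x != y -> e x y) /\
    (forall x y, x \notin K -> y \notin K -> ~~ e x y).

Fixpoint within (e : rel T) (k : nat) (u v : T) : bool :=
  match k with
  | 0 => u == v
  | k'.+1 => within e k' u v || [exists w, within e k' u w && e w v]
  end.

Definition dist_is (e : rel T) (u v : T) (l : nat) : bool :=
  within e l u v && (if l is l'.+1 then ~~ within e l' u v else true).

Definition Gamma (e : rel T) (l : nat) (u v : T) : {set T} :=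
  [set y | e u y && dist_is e y v l.-1].

Definition partial_orientation (e h : rel T) : Prop :=
  forall u v, h u v -> e u v.

(* B_H(v,a) membership is [within h a v x] *)
Definition weak_guidance (e h : rel T) (r : nat) : Prop :=
  partial_orientation e h /\
  forall u v l, u != v -> dist_is e u v l -> l <= r ->
    exists a b, a + b = l.-1 /\
      exists x y, [&& within h a u x, within h b v y & e x y].

Definition max_outdeg_dir (h : rel T) : nat :=
  \max_(u : T) #|[set v | h u v]|.

Variable R : realFieldType.
Local Open Scope ring_scope.

Definition fractional_orientation (e : rel T) (p : T -> T -> R) : Prop :=
  forall u v, e u v -> 0 <= p u v.

Definition max_outdeg_frac (e : rel T) (p : T -> T -> R) : R :=
  \big[Num.max/0]_(u : T) \sum_(v | e u v) p u v.

Definition fractional_guidance (e : rel T) (p : T -> T -> R) (r : nat) : Prop :=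
  fractional_orientation e p /\
  forall u v l, dist_is e u v l -> (2 <= l)%N -> (l <= r)%N ->
    1 <= \sum_(y in Gamma e l u v) p u y + \sum_(y in Gamma e l v u) p v y.
End GraphDefs.

Definition prime_power (n : nat) : Prop :=
  exists p k, [/\ prime p, (0 < k)%N & n = p ^ k].

From mathcomp Require Import all_boot all_order all_algebra.
From mathcomp Require Import zify.
Import Order.TTheory GRing.Theory Num.Theory.
Set Implicit Arguments. Unset Strict Implicit. Unset Printing Implicit Defensive.

(* The graph has n + 2 independent "points" and, for every pair of points, a
   private common neighbour inside the clique.  Two points are at distance 2
   and their private neighbour is the only vertex between them, so a
   fractional or weak 2-guidance system must put weight at least 1 on one of
   the two arcs from the points to that neighbour.  Summing over the pairs,
   the points carry total out-weight at least (n + 2)(n + 1)/2, hence one of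
   them has out-weight at least (n + 1)/2. *)

Local Open Scope ring_scope.

Lemma row_sum_bound_of_pair_cover (R : realFieldType) (I : finType)
    (q : I -> I -> R) (M : R) :
  (0 < #|I|)%N ->
  (forall i j, i != j -> 1 <= q i j + q j i) ->
  (forall i, \sum_(j | j != i) q i j <= M) ->
  (#|I|.-1)%:R / 2 <= M.
Proof.
move=> I_gt0 cover row_le.
set S := \sum_i \sum_(j | j != i) q i j.
have S_swap : \sum_i \sum_(j | j != i) q j i = S.
  rewrite (exchange_big_dep xpredT) //=.
  by apply: eq_bigr => i _; apply: eq_bigl => j; rewrite eq_sym.
have count : \sum_(i : I) \sum_(j | j != i) (1 : R) = (#|I| * #|I|.-1)%:R.
  rewrite (eq_bigr (fun=> (#|I|.-1)%:R)) => [|i _].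
    by rewrite sumr_const -mulrnA mulnC.
  by rewrite sumr_const -(cardC1 i).
have pairs_le : (#|I| * #|I|.-1)%:R <= 2 * S.
  rewrite -count mulr_natl mulr2n -[in X in _ <= X + _]S_swap -big_split /=.
  apply: ler_sum => i _; rewrite -big_split /=.
  by apply: ler_sum => j ji; rewrite addrC cover // eq_sym.
have S_le : S <= #|I|%:R * M.
  rewrite mulr_natl -[M *+ _]sumr_const.
  by apply: ler_sum => i _; apply: row_le.
have I_pos : 0 < #|I|%:R :> R by rewrite ltr0n.
rewrite ler_pdivrMr // -(ler_pM2l I_pos) -natrM.
by apply: le_trans pairs_le _; rewrite [M * 2]mulrC mulrCA ler_pM2l.
Qed.

Lemma ler_sum_inj (R : numDomainType) (I T : finType) (P : pred I) (Q : pred T)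
    (f : I -> T) (F : T -> R) :
  {in P &, injective f} -> (forall i, P i -> Q (f i)) ->
  (forall v, Q v -> 0 <= F v) ->
  \sum_(i | P i) F (f i) <= \sum_(v | Q v) F v.
Proof.
move=> f_inj PQ F_ge0; rewrite -(big_imset _ f_inj) /= (bigID (mem (f @: P)) Q) /=.
rewrite -[leLHS]addr0 lerD ?sumr_ge0 //; last by move=> v /andP[/F_ge0].
rewrite le_eqVlt; apply/orP; left; apply/eqP/eq_bigl => v.
by apply/idP/andP => [|[]//] vP; split=> //; case/imsetP: vP => i Pi ->; apply: PQ.
Qed.

Lemma within1 (T : finType) (e : rel T) x y : within e 1 x y = (x == y) || e x y.
Proof.
congr orb; apply/existsP/idP => [[w /andP[/eqP <-]] // | exy].
by exists x; rewrite /= eqxx.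
Qed.

Lemma within2 (T : finType) (e : rel T) x w y : e x w -> e w y -> within e 2 x y.
Proof.
move=> exw ewy; apply/orP; right; apply/existsP; exists w.
by rewrite ewy andbT -/(within e 1 x w) within1 exw orbT.
Qed.

Lemma sum_indicator_out (R : numDomainType) (T : finType) (e h : rel T) x :
  partial_orientation e h ->
  \sum_(y | e x y) (h x y)%:R = #|[set y | h x y]|%:R :> R.
Proof.
move=> sub_he; rewrite -sum1_card natr_sum big_mkcond [RHS]big_mkcond /=.
apply: eq_bigr => y _; rewrite inE.
by case hxy: (h x y); rewrite ?if_same ?sub_he.
Qed.

Section PairGadget.

Variables (T I : finType) (e : rel T) (u : I -> T) (X : I -> I -> T).
Hypothesis e_sym : symmetric e.
Hypothesis u_inj : injective u.
Hypothesis u_indep : forall i j, ~~ e (u i) (u j).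
Hypothesis e_uX : forall i j, i != j -> e (u i) (X i j).
Hypothesis XC : forall i j, X i j = X j i.
Hypothesis X_common : forall i j y, i != j -> e (u i) y -> e (u j) y -> y = X i j.
Hypothesis X_inj : forall i, {in predC1 i &, injective (X i)}.

Lemma e_Xu i j : i != j -> e (X i j) (u j).
Proof. by move=> ij; rewrite e_sym XC e_uX // eq_sym. Qed.

Lemma X_neq_u i j k : i != j -> X i j != u k.
Proof. by move=> ij; apply: contraNneq (u_indep i k) => <-; apply: e_uX. Qed.

Lemma dist_u i j : i != j -> dist_is e (u i) (u j) 2.
Proof.
move=> ij; rewrite /dist_is (within2 (e_uX ij) (e_Xu ij)) /= -/(within e 1 _ _).
by rewrite within1 negb_or (inj_eq u_inj) ij u_indep.
Qed.

Lemma Gamma_u i j : i != j -> Gamma e 2 (u i) (u j) = [set X i j].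
Proof.
move=> ij; apply/setP => y; rewrite !inE /dist_is /= -/(within e 1 _ _) within1.
apply/idP/eqP => [/and3P[euy /orP[/eqP yj|eyu] yuj] | ->].
- by rewrite yj eqxx in yuj.
- by apply: X_common; rewrite // e_sym.
- by rewrite e_uX // e_Xu // orbT X_neq_u.
Qed.

Lemma fractional_guidance_pair (R : realFieldType) (p : T -> T -> R) i j :
  fractional_guidance e p 2 -> i != j -> 1 <= p (u i) (X i j) + p (u j) (X i j).
Proof.
move=> [_ guide] ij; have := guide _ _ _ (dist_u ij) (leqnn 2) (leqnn 2).
by rewrite Gamma_u // Gamma_u 1?eq_sym // !big_set1 [X j i]XC.
Qed.

Lemma weak_guidance_pair (h : rel T) i j :
  weak_guidance e h 2 -> i != j -> h (u i) (X i j) || h (u j) (X i j).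
Proof.
move=> [sub_he guide] ij.
have arc_X i' j' y : i' != j' -> e (u i') y -> within h 1 (u j') y -> h (u j') (X i' j').
  move=> ij' ey; rewrite within1 => /orP[/eqP yj | hy].
    by rewrite -yj (negbTE (u_indep _ _)) in ey.
  by rewrite -(X_common ij' ey (sub_he _ _ hy)).
have uij : u i != u j by rewrite (inj_eq u_inj).
have [a [b [ab [x [y /and3P[hx hy exy]]]]]] := guide _ _ _ uij (dist_u ij) (leqnn 2).
have [[a0 b1]|[a1 b0]] : (a = 0 /\ b = 1 \/ a = 1 /\ b = 0)%N by lia.
  by move: hx hy exy; rewrite a0 b1 /= => /eqP <- hy /(arc_X _ _ _ ij) ->; rewrite ?orbT.
move: hx hy exy; rewrite a1 b0 /= => hx /eqP <- exu.
by rewrite XC (arc_X j i x) 1?eq_sym // e_sym.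
Qed.

Lemma outdeg_bound_of_pairs (R : realFieldType) (p : T -> T -> R) (M : R) :
  (0 < #|I|)%N -> fractional_orientation e p ->
  (forall i j, i != j -> 1 <= p (u i) (X i j) + p (u j) (X i j)) ->
  (forall x, \sum_(y | e x y) p x y <= M) ->
  (#|I|.-1)%:R / 2 <= M.
Proof.
move=> I_gt0 p_ge0 cover out_le.
apply: (row_sum_bound_of_pair_cover (q := fun i j => p (u i) (X i j))) => // [i j|i].
  by rewrite [X j i]XC; apply: cover.
apply: le_trans (out_le (u i)); apply: ler_sum_inj.
- exact: X_inj.
- by move=> j ji; apply: e_uX; rewrite eq_sym.
- by move=> y /p_ge0.
Qed.

Lemma max_outdeg_frac_ge (R : realFieldType) (p : T -> T -> R) :
  (0 < #|I|)%N -> fractional_guidance e p 2 -> (#|I|.-1)%:R / 2 <= max_outdeg_frac e p.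
Proof.
move=> I_gt0 guide; apply: (outdeg_bound_of_pairs (p := p)) => //.
- by case: guide.
- by move=> i j; apply: fractional_guidance_pair.
- by move=> x; apply: (le_bigmax _ (fun x => \sum_(y | e x y) p x y)).
Qed.

Lemma max_outdeg_dir_ge (R : realFieldType) (h : rel T) :
  (0 < #|I|)%N -> weak_guidance e h 2 -> (#|I|.-1)%:R / 2 <= (max_outdeg_dir h)%:R :> R.
Proof.
move=> I_gt0 guide; have [sub_he _] := guide.
apply: (outdeg_bound_of_pairs (p := fun x y => (h x y)%:R)) => // [i j ij|x].
- have := weak_guidance_pair guide ij.
  by rewrite -natrD ler1n; case: (h _ _); case: (h _ _).
- rewrite sum_indicator_out // ler_nat.
  exact: (@leq_bigmax _ (fun x => #|[set y | h x y]|)).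
Qed.

End PairGadget.

Local Close Scope ring_scope.

Section Construction.

Variable n : nat.
Local Notation N := (2 * (n ^ 2 + n + 1)).

(* The points are the vertices 0, ..., n + 1.  For a < b the vertex [line a b]
   is the private common neighbour of the points a and b; [lo] and [hi] decode
   it.  The vertices >= n + 2 form the clique, and those with [lo x >= hi x]
   are padding. *)
Definition lo (x : nat) := (x - n.+2) %/ n.+1.
Definition hi (x : nat) := ((x - n.+2) %% n.+1).+1.
Definition line (a b : nat) := n.+2 + a * n.+1 + b.-1.

Definition incident (v x : nat) := [&& n.+2 <= x, lo x < hi x & (v == lo x) || (v == hi x)].

Definition graph : rel 'I_N := fun x y =>
  (x != y) && [|| (n.+2 <= x) && (n.+2 <= y), incident x y | incident y x].

Lemma points_le_N : n.+2 <= N. Proof. lia. Qed.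

Definition point (i : 'I_n.+2) : 'I_N := widen_ord points_le_N i.

(* [insubd] falls back to [point i] only when [i = j] or [n <= 1]. *)
Definition pair_vertex (i j : 'I_n.+2) : 'I_N :=
  insubd (point i) (line (minn i j) (maxn i j)).

Lemma lohi_line a b : a < b <= n.+1 -> lo (line a b) = a /\ hi (line a b) = b.
Proof.
move=> ab; rewrite /lo /hi.
have -> : line a b - n.+2 = a * n.+1 + b.-1 by rewrite /line; lia.
rewrite divnMDl // modnMDl divn_small ?modn_small; lia.
Qed.

Lemma line_lohi x : n.+2 <= x -> line (lo x) (hi x) = x.
Proof. by move=> x_line; rewrite /line /lo /hi /= -addnA -divn_eq subnKC. Qed.

Lemma graph_sym : symmetric graph.
Proof.
move=> x y; rewrite /graph eq_sym [(n.+2 <= y) && _]andbC.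
by case: (incident x y); case: (incident y x); rewrite ?orbT ?orbF.
Qed.

Lemma graph_irrefl : irreflexive graph.
Proof. by move=> x; rewrite /graph eqxx. Qed.

Lemma graph_split : split_graph graph.
Proof.
exists [set x : 'I_N | n.+2 <= x]; split=> [x y | x y]; rewrite !inE.
  by move=> x_line y_line xy; rewrite /graph xy x_line y_line.
rewrite -!ltnNge /graph /incident => x_pt y_pt.
by apply/negP => /andP[_ /or3P[/andP[]|/and3P[]|/and3P[]]]; lia.
Qed.

Lemma point_inj : injective point.
Proof. by move=> i j /(congr1 val) /= /val_inj. Qed.

Lemma graph_point i y : graph (point i) y -> incident i y.
Proof.
have := ltn_ord i; rewrite /graph /incident /= => lt_i.
by case/andP=> _ /or3P[/andP[]|//|/and3P[]]; lia.
Qed.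

Lemma graph_points i j : ~~ graph (point i) (point j).
Proof.
have := ltn_ord j; apply: contraTN => /graph_point /and3P[] /=; lia.
Qed.

Lemma incident_line v a b :
  a < b <= n.+1 -> (v == a) || (v == b) -> incident v (line a b).
Proof.
move=> ab v_ab; have [lo_ab hi_ab] := lohi_line ab.
by rewrite /incident lo_ab hi_ab v_ab andbT; apply/andP; split; rewrite /line; lia.
Qed.

Hypothesis n_gt1 : 1 < n.

Lemma line_lt_N a b : a < b <= n.+1 -> line a b < N.
Proof. rewrite /line; nia. Qed.

Lemma val_pair_vertex i j :
  i != j -> val (pair_vertex i j) = line (minn i j) (maxn i j).
Proof.
move=> ij; have ij_nat : (i : nat) != j := ij.
have lt_i := ltn_ord i; have lt_j := ltn_ord j.
by rewrite val_insubd line_lt_N //; lia.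
Qed.

Lemma pair_vertexC i j : pair_vertex i j = pair_vertex j i.
Proof.
case: (eqVneq i j) => [-> // | ij]; apply: val_inj.
by rewrite !val_pair_vertex // 1?eq_sym // minnC maxnC.
Qed.

Lemma graph_point_pair i j : i != j -> graph (point i) (pair_vertex i j).
Proof.
move=> ij; have ij_nat : (i : nat) != j := ij.
have lt_i := ltn_ord i; have lt_j := ltn_ord j.
rewrite /graph val_pair_vertex // incident_line /=; try lia.
rewrite orbT andbT; apply/eqP => /(congr1 val) /=.
by rewrite val_pair_vertex // /line; lia.
Qed.

Lemma pair_vertex_common i j y :
  i != j -> graph (point i) y -> graph (point j) y -> y = pair_vertex i j.
Proof.
move=> ij /graph_point /and3P[y_line lohi_y i_y] /graph_point /and3P[_ _ j_y].
have ij_nat : (i : nat) != j := ij.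
apply: val_inj; rewrite /= val_pair_vertex // -(line_lohi y_line); congr line; lia.
Qed.

Lemma pair_vertex_inj i : {in predC1 i &, injective (pair_vertex i)}.
Proof.
move=> j k; rewrite !inE => ji ki /(congr1 val).
rewrite !val_pair_vertex 1?eq_sym //.
have ji_nat : (j : nat) != i := ji; have ki_nat : (k : nat) != i := ki.
have lt_i := ltn_ord i; have lt_j := ltn_ord j; have lt_k := ltn_ord k.
move=> line_eq.
have [|lo_j hi_j] := @lohi_line (minn i j) (maxn i j); first lia.
have [|lo_k hi_k] := @lohi_line (minn i k) (maxn i k); first lia.
rewrite line_eq in lo_j hi_j; apply: val_inj => /=; lia.
Qed.

Lemma graph_max_outdeg_frac_ge (R : realFieldType) (p : 'I_N -> 'I_N -> R) :
  fractional_guidance graph p 2 -> (n.+1%:R / 2 <= max_outdeg_frac graph p)%R.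
Proof.
move=> guide; have := max_outdeg_frac_ge graph_sym point_inj graph_points
  graph_point_pair pair_vertexC pair_vertex_common pair_vertex_inj _ guide.
by rewrite card_ord; apply.
Qed.

Lemma graph_max_outdeg_dir_ge (R : realFieldType) (h : rel 'I_N) :
  weak_guidance graph h 2 -> (n.+1%:R / 2 <= (max_outdeg_dir h)%:R :> R)%R.
Proof.
move=> guide; have := max_outdeg_dir_ge graph_sym point_inj graph_points
  graph_point_pair pair_vertexC pair_vertex_common pair_vertex_inj R _ guide.
by rewrite card_ord; apply.
Qed.

End Construction.

Lemma prime_power_gt1 n : prime_power n -> 1 < n.
Proof.
case=> p [k [p_prime k_gt0 ->]].
by rewrite -(expn0 p) ltn_exp2l ?prime_gt1.
Qed.

Theorem lemma31 (n : nat) :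
  prime_power n ->
  exists e : rel 'I_(2 * (n ^ 2 + n + 1)),
    [/\ simple_graph e, split_graph e,
      (forall (R : realFieldType) (p : 'I_(2 * (n ^ 2 + n + 1)) -> 'I_(2 * (n ^ 2 + n + 1)) -> R),
         fractional_guidance e p 2 ->
         (n.+1%:R / 2 <= max_outdeg_frac e p)%R)
    & (forall h : rel 'I_(2 * (n ^ 2 + n + 1)),
         weak_guidance e h 2 ->
         (n.+1%:R / 2 <= (max_outdeg_dir h)%:R :> rat)%R)].
Proof.
move=> /prime_power_gt1 n_gt1.
exists (@graph n); split.
- by split; [apply: graph_sym | apply: graph_irrefl].
- exact: graph_split.
- exact: (graph_max_outdeg_frac_ge n_gt1).
- exact: (graph_max_outdeg_dir_ge n_gt1).
Qed.
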